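(* Let $|a|>2$ and let $\langle z_0\rangle$ be a bitransitive attracting cycle of $B_a(z)=z^3\frac{z-a}{1-\bar a z}$, i.e. an attracting cycle whose immediate basin contains both free critical points $c_+$ and $c_-$ in different connected components. Then the multiplier of $\langle z_0\rangle$ is a non-negative real number.
   Context: For $|a|>2$ the free critical points of $B_a$ are $c_\pm=\frac{a}{3|a|^2}\left(2+|a|^2\pm\sqrt{(|a|^2-4)(|a|^2-1)}\right)$, which are mirror images of each other under $z\mapsto1/\bar z$. *)

From Stdlib Require Import Reals Lra.
Open Scope R_scope.

Definition Cx : Type := (R * R)%type.
Definition Cre (z : Cx) : R := fst z.
Definition Cim (z : Cx) : R := snd z.
Definition Cadd (z w : Cx) : Cx := (fst z + fst w, snd z + snd w).
Definition Copp (z : Cx) : Cx := (- fst z, - snd z).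
Definition Csub (z w : Cx) : Cx := Cadd z (Copp w).
Definition Cmul (z w : Cx) : Cx :=
  (fst z * fst w - snd z * snd w, fst z * snd w + snd z * fst w).
Definition Cconj (z : Cx) : Cx := (fst z, - snd z).
Definition Cnorm2 (z : Cx) : R := fst z * fst z + snd z * snd z.
Definition Cnorm (z : Cx) : R := sqrt (Cnorm2 z).
(* total inverse; the value at 0 is junk and never used at 0 below *)
Definition Cinv (z : Cx) : Cx := (fst z / Cnorm2 z, - snd z / Cnorm2 z).
Definition Cdiv (z w : Cx) : Cx := Cmul z (Cinv w).
Definition Cscal (r : R) (z : Cx) : Cx := (r * fst z, r * snd z).
Definition Cone : Cx := (1, 0).

Definition denB (a z : Cx) : Cx := Csub Cone (Cmul (Cconj a) z).
Definition B (a z : Cx) : Cx :=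
  Cdiv (Cmul (Cmul z (Cmul z z)) (Csub z a)) (denB a z).

(* B_a on the Riemann sphere C ∪ {∞}, with ∞ encoded as None:
   the pole 1/conj(a) is sent to ∞ and ∞ is fixed. *)
Definition Bhat (a : Cx) (z : option Cx) : option Cx :=
  match z with
  | None => None
  | Some w => if Req_EM_T (Cnorm2 (denB a w)) 0 then None else Some (B a w)
  end.

Definition orbit (a : Cx) (n : nat) (z : Cx) : option Cx := Nat.iter n (Bhat a) (Some z).

Definition exact_period (a z0 : Cx) (p : nat) : Prop :=
  (0 < p)%nat /\ orbit a p z0 = Some z0 /\
  forall k, (0 < k < p)%nat -> orbit a k z0 <> Some z0.

Definition in_cycle (a z0 : Cx) (p : nat) (w : Cx) : Prop :=
  exists k, (k < p)%nat /\ orbit a k z0 = Some w.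

Definition has_cderiv (f : Cx -> Cx) (z0 L : Cx) : Prop :=
  forall eps, 0 < eps -> exists delta, 0 < delta /\
    forall z, 0 < Cnorm (Csub z z0) < delta ->
      Cnorm (Csub (Csub (f z) (f z0)) (Cmul L (Csub z z0))) <= eps * Cnorm (Csub z z0).

Definition multiplier (a z0 : Cx) (p : nat) (lam : Cx) : Prop :=
  has_cderiv (Nat.iter p (B a)) z0 lam.

Definition basin (a z0 : Cx) (p : nat) (z : Cx) : Prop :=
  (forall n, orbit a n z <> None) /\
  forall eps, 0 < eps -> exists N, forall n w, (N <= n)%nat -> orbit a n z = Some w ->
    exists v, in_cycle a z0 p v /\ Cnorm (Csub w v) < eps.

Definition Copen (U : Cx -> Prop) : Prop :=
  forall z, U z -> exists r, 0 < r /\ forall w, Cnorm (Csub w z) < r -> U w.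

Definition Cconnected (T : Cx -> Prop) : Prop :=
  ~ exists U V : Cx -> Prop, Copen U /\ Copen V /\
      (forall z, T z -> U z \/ V z) /\
      (exists z, T z /\ U z) /\ (exists z, T z /\ V z) /\
      (forall z, T z -> U z -> V z -> False).

Definition same_component (S : Cx -> Prop) (z w : Cx) : Prop :=
  exists T : Cx -> Prop, (forall x, T x -> S x) /\ Cconnected T /\ T z /\ T w.

Definition immediate_basin (a z0 : Cx) (p : nat) (z : Cx) : Prop :=
  exists v, in_cycle a z0 p v /\ same_component (basin a z0 p) v z.

Definition c_plus (a : Cx) : Cx :=
  Cscal ((2 + Cnorm2 a + sqrt ((Cnorm2 a - 4) * (Cnorm2 a - 1))) / (3 * Cnorm2 a)) a.
Definition c_minus (a : Cx) : Cx :=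
  Cscal ((2 + Cnorm2 a - sqrt ((Cnorm2 a - 4) * (Cnorm2 a - 1))) / (3 * Cnorm2 a)) a.

Definition bitransitive_attracting (a z0 : Cx) (p : nat) (lam : Cx) : Prop :=
  exact_period a z0 p /\ multiplier a z0 p lam /\ Cnorm lam < 1 /\
  immediate_basin a z0 p (c_plus a) /\ immediate_basin a z0 p (c_minus a) /\
  ~ same_component (basin a z0 p) (c_plus a) (c_minus a).

(** For [|a| > 2] the reflection [tau z = 1 / conj z] in the unit circle
    commutes with [B_a], maps a nonzero cycle [<z0>] to the cycle [<tau z0>] and its
    basin to the basin of [<tau z0>], and exchanges the free critical points:
    [c_- = tau c_+].  Since [c_-] lies in both basins, the two cycles meet, so
    [tau z0 = B^k z0] for some [k < p].  If [k = 0], [tau] fixes the cycle, and the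
    basin component of [c_+] together with its [tau]-image is a connected subset of
    the basin containing [c_+] and [c_-], contradicting bitransitivity.  Otherwise
    [p = 2k], and differentiating [B^k o tau = tau o B^k] gives
    [(B^k)'(B^k z0) = |z0|^4 conj ((B^k)'(z0))], so the multiplier
    [(B^k)'(B^k z0) (B^k)'(z0) = |z0|^4 |(B^k)'(z0)|^2] is real and non-negative. *)

From Pilot Require Import Defs.
From Stdlib Require Import Reals Lra Lia Classical.
From Coquelicot Require Import Complex.
Open Scope R_scope.

(* [ring] and [field] only recognise the carrier [C], to which [Cx] is convertible. *)
Ltac Cx_as_C := match goal with |- @eq Cx ?x ?y => change (@eq C x y) end.

Lemma Cnorm_Cmod (z : C) : Cnorm z = Cmod z.
Proof. destruct z as [x y]; unfold Cnorm, Cmod, Cnorm2; simpl; now rewrite !Rmult_1_r. Qed.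

Lemma Cnorm2_eq_0 (z : C) : Cnorm2 z = 0 <-> z = 0%R.
Proof.
  destruct z as [x y]; unfold Cnorm2; simpl; split; intros H.
  - assert (x = 0 /\ y = 0) as [-> ->] by nra. reflexivity.
  - injection H as -> ->. ring.
Qed.

Lemma B_eq (a z : C) : B a z = (z * (z * z) * (z - a) / (1 - Cconj a * z))%C.
Proof.
  unfold B, Defs.Cdiv, Cdiv, Defs.Cinv, Cinv, Cnorm2; simpl.
  now rewrite !Rmult_1_r.
Qed.

Lemma Csub_self (z : C) : (z - z)%C = 0%R.
Proof. ring. Qed.

Lemma Csub_eq_0 (x y : C) : (x - y)%C = 0%R -> x = y.
Proof. intros E. replace x with ((x - y) + y)%C by ring. rewrite E. ring. Qed.

Lemma Cmod_sub_sym (x y : C) : Cmod (x - y) = Cmod (y - x).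
Proof. replace (x - y)%C with (- (y - x))%C by ring. apply Cmod_opp. Qed.

Lemma Cmod_sub_triangle (x y z : C) : Cmod (x - z) <= Cmod (x - y) + Cmod (y - z).
Proof. replace (x - z)%C with ((x - y) + (y - z))%C by ring. apply Cmod_triangle. Qed.

Lemma Cconj_neq_0 (x : C) : x <> 0%R -> Cconj x <> 0%R.
Proof. rewrite !Cmod_gt_0, Cmod_conj. auto. Qed.

Lemma Cmod_inv_sub (w z : C) : w <> 0%R -> z <> 0%R ->
  Cmod (/ w - / z) = Cmod (w - z) / (Cmod w * Cmod z).
Proof.
  intros Hw Hz.
  replace (/ w - / z)%C with (- (w - z) / (w * z))%C by (field; auto).
  unfold Cdiv. rewrite Cmod_mult, Cmod_opp, Cmod_inv, Cmod_mult by (apply Cmult_neq_0; auto).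
  reflexivity.
Qed.

Lemma Cinv_close (v w : C) m eps : 0 < m -> m <= Cmod v -> 0 < eps ->
  Cmod (w - v) < Rmin (m / 2) (eps * (m * m) / 2) -> Cmod (/ w - / v) < eps.
Proof.
  intros Hm Hmv He Hw. apply Rmin_Rgt_l in Hw as [Hw1 Hw2].
  assert (Hwv : Cmod v / 2 < Cmod w).
  { pose proof (Cmod_sub_triangle v w 0%R). rewrite Cmod_sub_sym in Hw1.
    replace (v - 0)%C with v in H by ring.
    replace (w - 0)%C with w in H by ring. lra. }
  assert (Hv0 : v <> 0%R) by (apply Cmod_gt_0; lra).
  assert (Hw0 : w <> 0%R) by (apply Cmod_gt_0; lra).
  rewrite Cmod_inv_sub by auto.
  apply Rmult_lt_reg_r with (Cmod w * Cmod v); [nra|].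
  unfold Rdiv. rewrite Rmult_assoc, Rinv_l, Rmult_1_r by nra.
  assert (eps * (m * m) <= eps * (Cmod v * Cmod v)).
  { apply Rmult_le_compat_l; [lra|]. apply Rmult_le_compat; lra. }
  assert (eps * Cmod v * (Cmod v / 2) < eps * Cmod v * Cmod w)
    by (apply Rmult_lt_compat_l; nra).
  nra.
Qed.

Definition Ccontinuous (f : C -> C) (z : C) : Prop :=
  forall eps, 0 < eps -> exists delta, 0 < delta /\
    forall w, Cmod (w - z) < delta -> Cmod (f w - f z) < eps.

Lemma Ccontinuous_ext f g z : (forall w, f w = g w) -> Ccontinuous f z -> Ccontinuous g z.
Proof.
  intros E H eps He. destruct (H eps He) as [d [Hd K]].
  exists d; split; auto. intros w Hw. rewrite <- !E. auto.
Qed.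

Lemma Ccontinuous_const (c z : C) : Ccontinuous (fun _ => c) z.
Proof.
  intros eps He. exists 1; split; [lra|]. intros w _.
  rewrite Csub_self, Cmod_0. lra.
Qed.

Lemma Ccontinuous_id (z : C) : Ccontinuous (fun w => w) z.
Proof. intros eps He. exists eps; auto. Qed.

Lemma Ccontinuous_conj (z : C) : Ccontinuous Cconj z.
Proof.
  intros eps He. exists eps; split; auto. intros w Hw.
  rewrite <- Cminus_conj, Cmod_conj. auto.
Qed.

Lemma Ccontinuous_comp f g z :
  Ccontinuous f z -> Ccontinuous g (f z) -> Ccontinuous (fun w => g (f w)) z.
Proof.
  intros Hf Hg eps He. destruct (Hg eps He) as [d1 [Hd1 H1]].
  destruct (Hf d1 Hd1) as [d2 [Hd2 H2]]. exists d2; auto.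
Qed.

Lemma Ccontinuous_add f g z :
  Ccontinuous f z -> Ccontinuous g z -> Ccontinuous (fun w => f w + g w)%C z.
Proof.
  intros Hf Hg eps He.
  destruct (Hf (eps / 2)) as [d1 [Hd1 H1]]; [lra|].
  destruct (Hg (eps / 2)) as [d2 [Hd2 H2]]; [lra|].
  exists (Rmin d1 d2); split; [now apply Rmin_pos|]. intros w Hw.
  apply Rmin_Rgt_l in Hw as [Hw1 Hw2].
  replace (f w + g w - (f z + g z))%C with ((f w - f z) + (g w - g z))%C by ring.
  specialize (H1 w Hw1). specialize (H2 w Hw2).
  pose proof (Cmod_triangle (f w - f z) (g w - g z)). lra.
Qed.

Lemma Ccontinuous_mul f g z :
  Ccontinuous f z -> Ccontinuous g z -> Ccontinuous (fun w => f w * g w)%C z.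
Proof.
  intros Hf Hg eps He.
  set (M := 1 + Cmod (f z) + Cmod (g z)).
  assert (HM : 1 <= M).
  { unfold M. pose proof (Cmod_ge_0 (f z)). pose proof (Cmod_ge_0 (g z)). lra. }
  set (e := Rmin 1 (eps / (2 * M))).
  assert (He0 : 0 < e) by (apply Rmin_pos; [lra | apply Rdiv_lt_0_compat; lra]).
  assert (He1 : e <= 1) by apply Rmin_l.
  assert (HeM : e * M <= eps / 2).
  { replace (eps / 2) with (eps / (2 * M) * M) by (field; lra).
    apply Rmult_le_compat_r; [lra | apply Rmin_r]. }
  destruct (Hf e He0) as [d1 [Hd1 H1]]. destruct (Hg e He0) as [d2 [Hd2 H2]].
  exists (Rmin d1 d2); split; [now apply Rmin_pos|]. intros w Hw.
  apply Rmin_Rgt_l in Hw as [Hw1 Hw2].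
  specialize (H1 w Hw1). specialize (H2 w Hw2).
  replace (f w * g w - f z * g z)%C
    with ((f w - f z) * (g w - g z) + (f w - f z) * g z + f z * (g w - g z))%C by ring.
  pose proof (Cmod_triangle ((f w - f z) * (g w - g z) + (f w - f z) * g z) (f z * (g w - g z))).
  pose proof (Cmod_triangle ((f w - f z) * (g w - g z)) ((f w - f z) * g z)).
  rewrite !Cmod_mult in *.
  pose proof (Cmod_ge_0 (f w - f z)). pose proof (Cmod_ge_0 (g w - g z)).
  pose proof (Cmod_ge_0 (f z)). pose proof (Cmod_ge_0 (g z)).
  assert (Cmod (f w - f z) * Cmod (g w - g z) <= e * e) by (apply Rmult_le_compat; lra).
  assert (Cmod (f w - f z) * Cmod (g z) <= e * Cmod (g z)) by (apply Rmult_le_compat_r; lra).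
  assert (Cmod (f z) * Cmod (g w - g z) <= Cmod (f z) * e) by (apply Rmult_le_compat_l; lra).
  unfold M in HeM. nra.
Qed.

Lemma Ccontinuous_inv (z : C) : z <> 0%R -> Ccontinuous (fun w => / w)%C z.
Proof.
  intros Hz eps He. apply Cmod_gt_0 in Hz.
  exists (Rmin (Cmod z / 2) (eps * (Cmod z * Cmod z) / 2)); split.
  - apply Rmin_pos; [lra|]. apply Rdiv_lt_0_compat; [|lra]. apply Rmult_lt_0_compat; nra.
  - intros w Hw. apply Cinv_close with (Cmod z); auto; lra.
Qed.

Lemma Ccontinuous_nonzero f z : Ccontinuous f z -> f z <> 0%R ->
  exists r, 0 < r /\ forall w, Cmod (w - z) < r -> f w <> 0%R.
Proof.
  intros Hf Hz. apply Cmod_gt_0 in Hz.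
  destruct (Hf (Cmod (f z)) Hz) as [r [Hr K]]. exists r; split; auto.
  intros w Hw E. specialize (K w Hw). rewrite E in K.
  replace (0 - f z)%C with (- f z)%C in K by ring. rewrite Cmod_opp in K. lra.
Qed.

(** Carathéodory's form of complex differentiability: the difference quotient
    extends continuously to [z].  Unlike [has_cderiv], it is closed under the
    algebraic operations and composition without any estimates. *)
Definition carath (f : C -> C) (z L : C) : Prop :=
  exists (phi : C -> C) r, 0 < r /\ Ccontinuous phi z /\ phi z = L /\
    forall w, Cmod (w - z) < r -> (f w - f z = phi w * (w - z))%C.

Lemma carath_ext f g z L : (forall w, f w = g w) -> carath f z L -> carath g z L.
Proof.
  intros E [phi [r [Hr [Hc [HL Hf]]]]]. exists phi, r; repeat split; auto.
  intros w Hw. rewrite <- !E. auto.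
Qed.

Lemma carath_val f z L L' : carath f z L -> L = L' -> carath f z L'.
Proof. now intros H <-. Qed.

Lemma carath_const (c z : C) : carath (fun _ => c) z 0%R.
Proof.
  exists (fun _ => 0%R), 1; repeat split; [lra | apply Ccontinuous_const |].
  intros w _. ring.
Qed.

Lemma carath_id (z : C) : carath (fun w => w) z 1%R.
Proof.
  exists (fun _ => 1%R), 1; repeat split; [lra | apply Ccontinuous_const |].
  intros w _. ring.
Qed.

Lemma carath_Ccontinuous f z L : carath f z L -> Ccontinuous f z.
Proof.
  intros [phi [r [Hr [Hc [_ Hf]]]]] eps He.
  destruct (Ccontinuous_mul phi (fun w => w - z)%C z Hc
              (Ccontinuous_add _ _ z (Ccontinuous_id z) (Ccontinuous_const _ z)) eps He)
    as [d [Hd K]].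
  exists (Rmin d r); split; [now apply Rmin_pos|]. intros w Hw.
  apply Rmin_Rgt_l in Hw as [Hw1 Hw2].
  rewrite Hf by auto. specialize (K w Hw1). cbv beta in K.
  rewrite Csub_self, Cmult_0_r in K.
  replace (phi w * (w - z))%C with (phi w * (w - z) - 0)%C by ring. exact K.
Qed.

Lemma carath_add f g z Lf Lg :
  carath f z Lf -> carath g z Lg -> carath (fun w => f w + g w)%C z (Lf + Lg)%C.
Proof.
  intros [p1 [r1 [Hr1 [Hc1 [<- Hf]]]]] [p2 [r2 [Hr2 [Hc2 [<- Hg]]]]].
  exists (fun w => p1 w + p2 w)%C, (Rmin r1 r2); repeat split.
  - now apply Rmin_pos.
  - now apply Ccontinuous_add.
  - intros w Hw. apply Rmin_Rgt_l in Hw as [Hw1 Hw2].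
    replace (f w + g w - (f z + g z))%C with ((f w - f z) + (g w - g z))%C by ring.
    rewrite Hf, Hg by auto. ring.
Qed.

Lemma carath_mul f g z Lf Lg : carath f z Lf -> carath g z Lg ->
  carath (fun w => f w * g w)%C z (Lf * g z + f z * Lg)%C.
Proof.
  intros Hfd Hgd. pose proof (carath_Ccontinuous _ _ _ Hgd) as Hgc.
  destruct Hfd as [p1 [r1 [Hr1 [Hc1 [<- Hf]]]]], Hgd as [p2 [r2 [Hr2 [Hc2 [<- Hg]]]]].
  exists (fun w => p1 w * g w + f z * p2 w)%C, (Rmin r1 r2); repeat split.
  - now apply Rmin_pos.
  - apply Ccontinuous_add; apply Ccontinuous_mul; auto using Ccontinuous_const.
  - intros w Hw. apply Rmin_Rgt_l in Hw as [Hw1 Hw2].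
    replace (f w * g w - f z * g z)%C with ((f w - f z) * g w + f z * (g w - g z))%C by ring.
    rewrite Hf, Hg by auto. ring.
Qed.

Lemma carath_comp f g z Lf Lg : carath f z Lf -> carath g (f z) Lg ->
  carath (fun w => g (f w)) z (Lg * Lf)%C.
Proof.
  intros Hfd Hgd. pose proof (carath_Ccontinuous _ _ _ Hfd) as Hfc.
  destruct Hfd as [p1 [r1 [Hr1 [Hc1 [<- Hf]]]]], Hgd as [p2 [r2 [Hr2 [Hc2 [<- Hg]]]]].
  destruct (Hfc r2 Hr2) as [d [Hd Kd]].
  exists (fun w => p2 (f w) * p1 w)%C, (Rmin r1 d); repeat split.
  - now apply Rmin_pos.
  - apply Ccontinuous_mul; auto. now apply Ccontinuous_comp.
  - intros w Hw. apply Rmin_Rgt_l in Hw as [Hw1 Hw2].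
    rewrite Hg, Hf by auto. ring.
Qed.

Lemma carath_inv (z : C) : z <> 0%R -> carath (fun w => / w)%C z (- / (z * z))%C.
Proof.
  intros Hz. pose proof Hz as Hm. apply Cmod_gt_0 in Hm.
  exists (fun w => - / z * / w)%C, (Cmod z); repeat split; auto.
  - apply Ccontinuous_mul; [apply Ccontinuous_const | now apply Ccontinuous_inv].
  - field. exact Hz.
  - intros w Hw. assert (Hw0 : w <> 0%R).
    { intros ->. replace (0 - z)%C with (- z)%C in Hw by ring. rewrite Cmod_opp in Hw. lra. }
    field. auto.
Qed.

Lemma carath_conj f z L :
  carath f (Cconj z) L -> carath (fun u => Cconj (f (Cconj u))) z (Cconj L).
Proof.
  intros [phi [r [Hr [Hc [<- Hf]]]]].
  exists (fun u => Cconj (phi (Cconj u))), r; repeat split; auto.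
  - apply (Ccontinuous_comp (fun u => phi (Cconj u)) Cconj); [|apply Ccontinuous_conj].
    apply (Ccontinuous_comp Cconj phi); [apply Ccontinuous_conj | exact Hc].
  - intros w Hw. rewrite <- Cminus_conj, Hf.
    + now rewrite Cmult_conj, Cminus_conj, !Cconj_conj.
    + now rewrite <- Cminus_conj, Cmod_conj.
Qed.

Lemma has_cderiv_Cmod f (z L : C) : has_cderiv f z L <->
  forall eps, 0 < eps -> exists delta, 0 < delta /\ forall w, 0 < Cmod (w - z) < delta ->
    Cmod (f w - f z - L * (w - z)) <= eps * Cmod (w - z).
Proof. unfold has_cderiv. now setoid_rewrite Cnorm_Cmod. Qed.

Lemma carath_has_cderiv f z L : carath f z L -> has_cderiv f z L.
Proof.
  intros [phi [r [Hr [Hc [<- Hf]]]]]. apply has_cderiv_Cmod. intros eps He.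
  destruct (Hc eps He) as [d [Hd Kd]].
  exists (Rmin r d); split; [now apply Rmin_pos|]. intros w [_ Hw].
  apply Rmin_Rgt_l in Hw as [Hw1 Hw2].
  rewrite Hf by auto.
  replace (phi w * (w - z) - phi z * (w - z))%C with ((phi w - phi z) * (w - z))%C by ring.
  rewrite Cmod_mult. apply Rmult_le_compat_r; [apply Cmod_ge_0 | left; auto].
Qed.

Lemma has_cderiv_unique_loc (f g : C -> C) (z Lf Lg : C) r : 0 < r ->
  (forall w, Cmod (w - z) < r -> f w = g w) ->
  has_cderiv f z Lf -> has_cderiv g z Lg -> Lf = Lg.
Proof.
  intros Hr Efg Hf Hg. rewrite has_cderiv_Cmod in Hf, Hg.
  apply NNPP. intros Hne.
  assert (HP : 0 < Cmod (Lf - Lg)).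
  { apply Cmod_gt_0. intros E. now apply Hne, Csub_eq_0. }
  set (e := Cmod (Lf - Lg) / 4).
  destruct (Hf e) as [d1 [Hd1 K1]]; [unfold e; lra|].
  destruct (Hg e) as [d2 [Hd2 K2]]; [unfold e; lra|].
  set (t := Rmin r (Rmin d1 d2) / 2).
  assert (Ht : 0 < t < Rmin r (Rmin d1 d2)).
  { pose proof (Rmin_pos _ _ Hr (Rmin_pos _ _ Hd1 Hd2)). unfold t; lra. }
  destruct Ht as [Ht0 Ht]. apply Rmin_Rgt_l in Ht as [Htr Ht]. apply Rmin_Rgt_l in Ht as [Ht1 Ht2].
  set (w := (z + RtoC t)%C).
  assert (Hm : Cmod (w - z) = t).
  { unfold w. replace (z + RtoC t - z)%C with (RtoC t) by ring.
    rewrite Cmod_R. apply Rabs_right; lra. }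
  specialize (K1 w). specialize (K2 w). rewrite Hm in K1, K2.
  specialize (K1 (conj Ht0 Ht1)). specialize (K2 (conj Ht0 Ht2)).
  rewrite <- (Efg w), <- (Efg z) in K2 by (rewrite ?Hm, ?Csub_self, ?Cmod_0; lra).
  assert (Cmod ((Lf - Lg) * (w - z)) <= e * t + e * t).
  { replace ((Lf - Lg) * (w - z))%C
      with ((f w - f z - Lg * (w - z)) - (f w - f z - Lf * (w - z)))%C by ring.
    pose proof (Cmod_triangle (f w - f z - Lg * (w - z)) (- (f w - f z - Lf * (w - z)))).
    rewrite Cmod_opp in H. unfold Cminus at 1. lra. }
  rewrite Cmod_mult, Hm in H. unfold e in H. nra.
Qed.

Lemma Bhat_Some (a w : C) : (1 - Cconj a * w)%C <> 0%R -> Bhat a (Some w) = Some (B a w).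
Proof.
  intros H. simpl. destruct (Req_EM_T _ 0) as [E|]; auto.
  now apply Cnorm2_eq_0 in E.
Qed.

Lemma Bhat_Some_inv (a w : C) : Bhat a (Some w) <> None -> (1 - Cconj a * w)%C <> 0%R.
Proof.
  intros H E. apply H. simpl. destruct (Req_EM_T _ 0) as [|E']; auto.
  now apply Cnorm2_eq_0 in E.
Qed.

Definition B_deriv (a z : C) : C :=
  ((4 * z - 3 * a) * (z * z) * (1 - Cconj a * z) + z * (z * z) * (z - a) * Cconj a)
  / ((1 - Cconj a * z) * (1 - Cconj a * z)).

Lemma carath_B (a z : C) : (1 - Cconj a * z)%C <> 0%R -> carath (B a) z (B_deriv a z).
Proof.
  intros Hz. apply (carath_ext (fun w => w * (w * w) * (w - a) * / (1 + - Cconj a * w))%C).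
  { intros w. rewrite B_eq. unfold Cdiv. do 2 f_equal. ring. }
  eapply carath_val.
  - apply carath_mul.
    + apply carath_mul; [apply carath_mul; [apply carath_id | apply carath_mul; apply carath_id]|].
      apply carath_add; [apply carath_id | apply carath_const].
    + apply (carath_comp (fun w => 1 + - Cconj a * w)%C (fun w => / w)%C).
      * apply carath_add; [apply carath_const|].
        apply (carath_mul (fun _ => - Cconj a)%C (fun w => w));
          [apply carath_const | apply carath_id].
      * apply carath_inv. replace (1 + - Cconj a * z)%C with (1 - Cconj a * z)%C by ring. exact Hz.
  - unfold B_deriv. field. exact Hz.
Qed.

Lemma B_zero (a : C) : B a (RtoC 0) = RtoC 0.
Proof. rewrite B_eq. Cx_as_C. unfold Cdiv. ring. Qed.

Lemma iter_B_zero (a : C) n : Nat.iter n (B a) (RtoC 0) = RtoC 0.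
Proof. induction n as [|n IH]; simpl; [reflexivity|]. rewrite IH. apply B_zero. Qed.

Lemma B_deriv_zero (a : C) : B_deriv a 0%R = 0%R.
Proof. unfold B_deriv, Cdiv. ring. Qed.

Lemma no_pole_at_zero (a : C) : (1 - Cconj a * 0)%C <> 0%R.
Proof.
  replace (1 - Cconj a * 0)%C with (RtoC 1) by ring.
  intros E. injection E. lra.
Qed.

Definition tau (w : C) : C := / Cconj w.

(** The points where [B a ∘ tau = tau ∘ B a] can be checked by field arithmetic:
    [w] is neither [0], nor the zero [a], nor the pole [1 / conj a]. *)
Definition B_regular (a w : C) : Prop :=
  w <> 0%R /\ w <> a /\ (1 - Cconj a * w)%C <> 0%R.

Lemma tau_involutive (w : C) : w <> 0%R -> tau (tau w) = w.
Proof.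
  intros H. unfold tau. rewrite Cinv_conj, Cconj_conj by now apply Cconj_neq_0.
  field. exact H.
Qed.

Lemma Ccontinuous_tau (w : C) : w <> 0%R -> Ccontinuous tau w.
Proof.
  intros H. apply (Ccontinuous_comp Cconj (fun x => / x)%C).
  - apply Ccontinuous_conj.
  - apply Ccontinuous_inv. now apply Cconj_neq_0.
Qed.

Lemma tau_close (v w : C) m eps : 0 < m -> m <= Cmod v -> 0 < eps ->
  Cmod (w - v) < Rmin (m / 2) (eps * (m * m) / 2) -> Cmod (tau w - tau v) < eps.
Proof.
  intros Hm Hv He Hw. apply Cinv_close with m; auto.
  - now rewrite Cmod_conj.
  - now rewrite <- Cminus_conj, Cmod_conj.
Qed.

Lemma Cconj_1 : Cconj (RtoC 1) = RtoC 1.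
Proof. unfold Cconj, RtoC; simpl. f_equal. ring. Qed.

Lemma tau_B (a w : C) : B_regular a w ->
  (1 - Cconj a * tau w)%C <> 0%R /\ B a (tau w) = tau (B a w).
Proof.
  intros [H0 [Ha HD]]. unfold tau.
  assert (C0 : Cconj w <> 0%R) by now apply Cconj_neq_0.
  assert (C1 : (Cconj w - Cconj a)%C <> 0%R).
  { rewrite <- Cminus_conj. apply Cconj_neq_0. intros E. now apply Ha, Csub_eq_0. }
  assert (C2 : (1 - a * Cconj w)%C <> 0%R).
  { replace (1 - a * Cconj w)%C with (Cconj (1 - Cconj a * w)).
    - now apply Cconj_neq_0.
    - now rewrite Cminus_conj, Cmult_conj, Cconj_conj, Cconj_1. }
  assert (E1 : (1 - Cconj a * / Cconj w)%C = ((Cconj w - Cconj a) / Cconj w)%C)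
    by (field; auto).
  split.
  - rewrite E1. intros E. apply C1.
    replace (Cconj w - Cconj a)%C with ((Cconj w - Cconj a) / Cconj w * Cconj w)%C
      by (field; auto).
    rewrite E. ring.
  - rewrite !B_eq. Cx_as_C. rewrite Cdiv_conj by auto.
    rewrite !Cminus_conj, !Cmult_conj, Cconj_conj, Cconj_1, Cminus_conj.
    field. auto.
Qed.

Lemma c_minus_tau (a : C) : 2 < Cnorm a -> c_minus a = tau (c_plus a).
Proof.
  intros Ha. destruct a as [a1 a2].
  unfold c_minus, c_plus, tau, Cscal, Cnorm2, Cconj, Cinv. simpl.
  unfold Cnorm, Cnorm2 in Ha. simpl in Ha.
  set (r := a1 * a1 + a2 * a2) in *.
  assert (Hr : 4 < r).
  { assert (0 <= r) by (unfold r; nra). pose proof (sqrt_sqrt r H). nra. }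
  set (q := sqrt ((r - 4) * (r - 1))).
  assert (Hq : q * q = (r - 4) * (r - 1)) by (apply sqrt_sqrt; nra).
  assert (Hq0 : 0 <= q) by apply sqrt_pos.
  (* [c_+ = s a] and [c_- = s' a] with [s s' |a|^2 = 1], i.e. [c_- = 1 / conj c_+] *)
  set (s := (2 + r + q) / (3 * r)).
  assert (Hs : 0 < s) by (unfold s; apply Rdiv_lt_0_compat; lra).
  assert (Hss : (2 + r - q) / (3 * r) = 1 / (s * r)).
  { unfold s. field_simplify_eq; [nra | split; lra]. }
  assert (Hden : s * a1 * (s * a1 * 1) + - (s * a2) * (- (s * a2) * 1) = s * s * r)
    by (unfold r; ring).
  f_equal; rewrite Hden, Hss; field; lra.
Qed.

Lemma carath_iter (a z : C) n :
  (forall j, (j < n)%nat -> (1 - Cconj a * Nat.iter j (B a) z)%C <> 0%R) ->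
  exists L, carath (Nat.iter n (B a)) z L.
Proof.
  induction n as [|n IH]; intros H.
  - exists 1%R. apply carath_id.
  - destruct IH as [L HL]; [intros j Hj; apply H; lia|].
    exists (B_deriv a (Nat.iter n (B a) z) * L)%C.
    apply (carath_comp (Nat.iter n (B a)) (B a)); auto.
    apply carath_B, H. lia.
Qed.

Lemma orbit_S (a z : C) n : orbit a (S n) z = Bhat a (orbit a n z).
Proof. reflexivity. Qed.

Lemma orbit_add (a z : C) m n : orbit a (m + n) z = Nat.iter m (Bhat a) (orbit a n z).
Proof. apply Nat.iter_add. Qed.

Lemma iter_Bhat_None (a : C) m : Nat.iter m (Bhat a) None = None.
Proof. induction m as [|m IH]; simpl; [|rewrite IH]; reflexivity. Qed.

Lemma orbit_defined (a z : C) n : orbit a n z <> None ->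
  orbit a n z = Some (Nat.iter n (B a) z) /\
  forall j, (j < n)%nat -> (1 - Cconj a * Nat.iter j (B a) z)%C <> 0%R.
Proof.
  induction n as [|n IH]; intros H.
  - split; [reflexivity | intros; lia].
  - rewrite orbit_S in H.
    destruct IH as [E1 E2]; [intros E; apply H; now rewrite E|].
    rewrite E1 in H. apply Bhat_Some_inv in H.
    split.
    + now rewrite orbit_S, E1, Bhat_Some.
    + intros j Hj. destruct (Nat.eq_dec j n) as [->|]; auto. apply E2. lia.
Qed.

Definition avoids_zero (a z : C) : Prop :=
  forall n, exists w : C, orbit a n z = Some w /\ w <> 0%R.

Lemma avoids_zero_regular (a z w : C) n :
  avoids_zero a z -> orbit a n z = Some w -> B_regular a w.
Proof.
  intros Hz E. destruct (Hz n) as [w' [E' Hw]]. rewrite E in E'. injection E' as <-.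
  destruct (Hz (S n)) as [w2 [E2 Hw2]]. rewrite orbit_S, E in E2.
  assert (HD : (1 - Cconj a * w)%C <> 0%R) by (apply Bhat_Some_inv; now rewrite E2).
  rewrite Bhat_Some in E2 by auto. injection E2 as E2.
  repeat split; auto. intros ->. apply Hw2. rewrite <- E2, B_eq. unfold Cdiv. ring.
Qed.

Lemma orbit_tau (a z : C) : avoids_zero a z ->
  forall n w, orbit a n z = Some w -> orbit a n (tau z) = Some (tau w).
Proof.
  intros Hz n. induction n as [|n IH]; intros w E.
  - injection E as <-. reflexivity.
  - destruct (Hz n) as [w' [E' _]].
    destruct (tau_B a w' (avoids_zero_regular a z w' n Hz E')) as [D1 D2].
    pose proof (avoids_zero_regular a z w' n Hz E') as [_ [_ D]].
    rewrite orbit_S, E', Bhat_Some in E by auto. injection E as <-.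
    rewrite orbit_S, (IH w' E'), Bhat_Some by auto. now rewrite D2.
Qed.

Lemma iter_tau (a w : C) k : (forall j, (j < k)%nat -> B_regular a (Nat.iter j (B a) w)) ->
  Nat.iter k (B a) (tau w) = tau (Nat.iter k (B a) w).
Proof.
  induction k as [|k IH]; intros H; [reflexivity|].
  simpl. rewrite IH by (intros; apply H; lia). apply tau_B, H. lia.
Qed.

Lemma B_regular_nbhd (a z : C) : B_regular a z ->
  exists r, 0 < r /\ forall w, Cmod (w - z) < r -> B_regular a w.
Proof.
  intros [H0 [Ha HD]].
  destruct (Ccontinuous_nonzero (fun w => w) z (Ccontinuous_id z) H0) as [r1 [Hr1 K1]].
  destruct (Ccontinuous_nonzero (fun w => w - a)%C z) as [r2 [Hr2 K2]].
  { apply Ccontinuous_add; [apply Ccontinuous_id | apply Ccontinuous_const]. }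
  { intros E. now apply Ha, Csub_eq_0. }
  destruct (Ccontinuous_nonzero (fun w => 1 - Cconj a * w)%C z) as [r3 [Hr3 K3]]; auto.
  { apply Ccontinuous_add; [apply Ccontinuous_const|].
    apply (Ccontinuous_ext (fun w => - Cconj a * w)%C); [intros; ring|].
    apply Ccontinuous_mul; [apply Ccontinuous_const | apply Ccontinuous_id]. }
  exists (Rmin r1 (Rmin r2 r3)); split; [now repeat apply Rmin_pos|].
  intros w Hw. apply Rmin_Rgt_l in Hw as [Hw1 Hw]. apply Rmin_Rgt_l in Hw as [Hw2 Hw3].
  repeat split; auto.
  intros E. apply (K2 w Hw2). cbv beta. rewrite E. ring.
Qed.

Lemma B_regular_orbit_nbhd (a z : C) k :
  (forall j, (j < k)%nat -> B_regular a (Nat.iter j (B a) z)) ->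
  exists r, 0 < r /\ forall w, Cmod (w - z) < r ->
    forall j, (j < k)%nat -> B_regular a (Nat.iter j (B a) w).
Proof.
  induction k as [|k IH]; intros H.
  - exists 1. split; [lra | intros; lia].
  - destruct IH as [r1 [Hr1 K1]]; [intros j Hj; apply H; lia|].
    destruct (B_regular_nbhd a _ (H k (Nat.lt_succ_diag_r k))) as [r2 [Hr2 K2]].
    destruct (carath_iter a z k) as [L HL].
    { intros j Hj. apply H. lia. }
    destruct (carath_Ccontinuous _ _ _ HL r2 Hr2) as [d [Hd Kd]].
    exists (Rmin r1 d); split; [now apply Rmin_pos|].
    intros w Hw j Hj. apply Rmin_Rgt_l in Hw as [Hw1 Hw2].
    destruct (Nat.eq_dec j k) as [->|]; [apply K2, Kd; auto | apply K1; auto; lia].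
Qed.

Lemma pos_lower_bound (f : nat -> R) n : (forall i, (i < n)%nat -> 0 < f i) ->
  exists m, 0 < m /\ forall i, (i < n)%nat -> m <= f i.
Proof.
  induction n as [|n IH]; intros H.
  - exists 1. split; [lra | intros; lia].
  - destruct IH as [m [Hm K]]; [intros i Hi; apply H; lia|].
    exists (Rmin m (f n)). split; [apply Rmin_pos; auto|].
    intros i Hi. destruct (Nat.eq_dec i n) as [->|]; [apply Rmin_r|].
    eapply Rle_trans; [apply Rmin_l | apply K; lia].
Qed.

Lemma pos_lower_bound2 (f : nat -> nat -> R) n n' :
  (forall i j, (i < n)%nat -> (j < n')%nat -> 0 < f i j) ->
  exists m, 0 < m /\ forall i j, (i < n)%nat -> (j < n')%nat -> m <= f i j.
Proof.
  induction n as [|n IH]; intros H.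
  - exists 1. split; [lra | intros; lia].
  - destruct IH as [m [Hm K]]; [intros i j Hi Hj; apply H; lia|].
    destruct (pos_lower_bound (f n) n') as [m' [Hm' K']]; [intros j Hj; apply H; lia|].
    exists (Rmin m m'). split; [apply Rmin_pos; auto|].
    intros i j Hi Hj. destruct (Nat.eq_dec i n) as [->|].
    + eapply Rle_trans; [apply Rmin_r | auto].
    + eapply Rle_trans; [apply Rmin_l | apply K; auto; lia].
Qed.

Section Cycle.

Variables (a z0 : C) (p : nat).
Hypotheses (Hp : (0 < p)%nat) (Hper : orbit a p z0 = Some z0).

Local Notation Z n := (Nat.iter n (B a) z0).

Lemma orbit_mul_period k : orbit a (k * p) z0 = Some z0.
Proof. induction k as [|k IH]; [reflexivity|]. simpl. now rewrite orbit_add, IH. Qed.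

Lemma cycle_orbit n : orbit a n z0 = Some (Z n) /\ (1 - Cconj a * Z n)%C <> 0%R.
Proof.
  assert (HS : orbit a (S n) z0 <> None).
  { intros E. pose proof (orbit_mul_period (S n)) as K.
    replace (S n * p)%nat with ((S n * p - S n) + S n)%nat in K by nia.
    rewrite orbit_add, E, iter_Bhat_None in K. discriminate. }
  destruct (orbit_defined a z0 (S n) HS) as [_ E2]. split; [|apply E2; lia].
  apply orbit_defined. intros E. apply HS. now rewrite orbit_S, E.
Qed.

Lemma cycle_add_period n : Z (n + p) = Z n.
Proof.
  destruct (cycle_orbit (n + p)) as [E _]. rewrite orbit_add, Hper in E.
  change (Nat.iter n (Bhat a) (Some z0)) with (orbit a n z0) in E.
  rewrite (proj1 (cycle_orbit n)) in E. now injection E.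
Qed.

Lemma cycle_mod n : Z n = Z (n mod p).
Proof.
  assert (Hq : forall q r, Z (p * q + r) = Z r).
  { induction q as [|q IH]; intros r; [now rewrite Nat.mul_0_r|].
    replace (p * S q + r)%nat with ((p * q + r) + p)%nat by lia.
    now rewrite cycle_add_period. }
  rewrite <- (Hq (n / p)%nat (n mod p)%nat). f_equal. apply Nat.div_mod_eq.
Qed.

Lemma in_cycle_iter v : in_cycle a z0 p v -> exists k, (k < p)%nat /\ v = Z k.
Proof.
  intros [k [Hk E]]. exists k. split; auto.
  rewrite (proj1 (cycle_orbit k)) in E. now injection E.
Qed.

Lemma cycle_iter_closed i n : exists k, (k < p)%nat /\ Nat.iter n (B a) (Z i) = Z k.
Proof.
  exists ((n + i) mod p)%nat. split; [apply Nat.mod_upper_bound; lia|].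
  rewrite <- cycle_mod. symmetry. apply Nat.iter_add.
Qed.

End Cycle.

Lemma basins_share_cycle_point (a z0 z1 z : C) p : (0 < p)%nat ->
  orbit a p z0 = Some z0 -> orbit a p z1 = Some z1 ->
  basin a z0 p z -> basin a z1 p z ->
  exists i j, (i < p)%nat /\ (j < p)%nat /\ Nat.iter i (B a) z0 = Nat.iter j (B a) z1.
Proof.
  intros Hp H0 H1 [Hdef Hconv0] [_ Hconv1].
  apply NNPP. intros Hno.
  (* otherwise the two cycles are at some positive distance m, while the orbit of z
     eventually comes within m / 2 of both *)
  destruct (pos_lower_bound2
              (fun i j => Cmod (Nat.iter i (B a) z0 - Nat.iter j (B a) z1)) p p)
    as [m [Hm Km]].
  { intros i j Hi Hj. apply Cmod_gt_0. intros E. apply Hno. exists i, j.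
    repeat split; auto. now apply Csub_eq_0. }
  destruct (Hconv0 (m / 2)) as [N0 K0]; [lra|].
  destruct (Hconv1 (m / 2)) as [N1 K1]; [lra|].
  destruct (orbit a (N0 + N1) z) as [w|] eqn:Ew; [|now apply (Hdef (N0 + N1)%nat)].
  destruct (K0 (N0 + N1)%nat w) as [v0 [Hv0 D0]]; [lia | auto |].
  destruct (K1 (N0 + N1)%nat w) as [v1 [Hv1 D1]]; [lia | auto |].
  destruct (in_cycle_iter a z0 p Hp H0 v0 Hv0) as [i [Hi ->]].
  destruct (in_cycle_iter a z1 p Hp H1 v1 Hv1) as [j [Hj ->]].
  rewrite Cnorm_Cmod in D0, D1. specialize (Km i j Hi Hj). cbv beta in Km.
  pose proof (Cmod_sub_triangle (Nat.iter i (B a) z0) w (Nat.iter j (B a) z1)).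
  rewrite (Cmod_sub_sym _ w) in H. change (Cmod (w - Nat.iter i (B a) z0) < m / 2) in D0.
  change (Cmod (w - Nat.iter j (B a) z1) < m / 2) in D1. lra.
Qed.

Lemma Cconnected_one_side (T U V : Cx -> Prop) : Cconnected T -> Copen U -> Copen V ->
  (forall z, T z -> U z \/ V z) -> (forall z, T z -> U z -> V z -> False) ->
  (forall z, T z -> ~ V z) \/ (forall z, T z -> ~ U z).
Proof.
  intros HT oU oV cov dis. apply NNPP. intros H. apply not_or_and in H as [HV HU].
  apply not_all_ex_not in HV as [y HV]. apply not_all_ex_not in HU as [y' HU].
  apply HT. exists U, V. repeat split; auto.
  - exists y'. split; tauto.
  - exists y. split; tauto.
Qed.

Lemma Cconnected_union (T1 T2 : Cx -> Prop) x : Cconnected T1 -> Cconnected T2 ->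
  T1 x -> T2 x -> Cconnected (fun y => T1 y \/ T2 y).
Proof.
  intros H1 H2 X1 X2 [U [V [oU [oV [cov [[y [Ty Uy]] [[y' [Ty' Vy']] dis]]]]]]].
  assert (side : forall T, Cconnected T -> (forall z, T z -> T1 z \/ T2 z) ->
            (forall z, T z -> ~ V z) \/ (forall z, T z -> ~ U z)).
  { intros T HT sub. apply Cconnected_one_side; auto. intros z Tz. eauto. }
  destruct (side T1) as [S1|S1]; auto; destruct (side T2) as [S2|S2]; auto.
  - destruct Ty' as [Ty'|Ty']; [apply (S1 y') | apply (S2 y')]; auto.
  - destruct (cov x) as [Ux|Vx]; auto; [apply (S2 x) | apply (S1 x)]; auto.
  - destruct (cov x) as [Ux|Vx]; auto; [apply (S1 x) | apply (S2 x)]; auto.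
  - destruct Ty as [Ty|Ty]; [apply (S1 y) | apply (S2 y)]; auto.
Qed.

Lemma Copen_tau_preimage (U : Cx -> Prop) : Copen U -> Copen (fun z : C => z <> 0%R /\ U (tau z)).
Proof.
  intros oU z [Hz Uz]. destruct (oU (tau z) Uz) as [r [Hr K]].
  destruct (Ccontinuous_tau z Hz r Hr) as [d [Hd Kd]].
  destruct (Ccontinuous_nonzero (fun w => w) z (Ccontinuous_id z) Hz) as [r0 [Hr0 K0]].
  exists (Rmin d r0). split; [now apply Rmin_pos|].
  intros w Hw. rewrite Cnorm_Cmod in Hw. apply Rmin_Rgt_l in Hw as [Hw1 Hw2].
  split; [now apply K0|]. apply K. rewrite Cnorm_Cmod. now apply Kd.
Qed.

Lemma Cconnected_tau_image (T : Cx -> Prop) : (forall x : C, T x -> x <> 0%R) -> Cconnected T ->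
  Cconnected (fun y => exists t, T t /\ y = tau t).
Proof.
  intros H0 HT [U [V [oU [oV [cov [[y [[t [Tt ->]] Uy]] [[y' [[t' [Tt' ->]] Vy']] dis]]]]]]].
  apply HT. exists (fun z : C => z <> 0%R /\ U (tau z)), (fun z : C => z <> 0%R /\ V (tau z)).
  repeat split; try apply Copen_tau_preimage; auto.
  - intros z Tz. destruct (cov (tau z)) as [K|K]; [exists z; auto | left | right]; auto.
  - exists t. auto.
  - exists t'. auto.
  - intros z Tz [_ Uz] [_ Vz]. apply (dis (tau z)); eauto.
Qed.

Section ReflectedCycle.

Variables (a z0 : C) (p : nat).
Hypotheses (Hp : (0 < p)%nat) (Hper : orbit a p z0 = Some z0) (Hz0 : z0 <> 0%R).

Local Notation Z n := (Nat.iter n (B a) z0 : C).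

Lemma cycle_nonzero n : Z n <> 0%R.
Proof.
  intros E. apply Hz0.
  pose proof (proj1 (cycle_orbit a z0 p Hp Hper (n * p))) as E1.
  rewrite orbit_mul_period in E1 by exact Hper. injection E1 as ->.
  replace (n * p)%nat with ((n * p - n) + n)%nat by nia.
  rewrite Nat.iter_add, E. apply iter_B_zero.
Qed.

Lemma cycle_avoids_zero : avoids_zero a z0.
Proof.
  intros n. exists (Z n). split; [apply (cycle_orbit a z0 p Hp Hper n) | apply cycle_nonzero].
Qed.

Lemma cycle_regular n : B_regular a (Z n).
Proof.
  apply (avoids_zero_regular a z0 _ n cycle_avoids_zero). apply (cycle_orbit a z0 p Hp Hper n).
Qed.

Lemma iter_tau_cycle n : Nat.iter n (B a) (tau z0) = tau (Z n).
Proof. apply iter_tau. intros; apply cycle_regular. Qed.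

Lemma cycle_norm_lower_bound :
  exists m, 0 < m /\ forall v, in_cycle a z0 p v -> m <= Cmod v.
Proof.
  destruct (pos_lower_bound (fun k => Cmod (Z k)) p) as [m [Hm K]].
  { intros k _. apply Cmod_gt_0, cycle_nonzero. }
  exists m. split; auto. intros v Hv.
  destruct (in_cycle_iter a z0 p Hp Hper v Hv) as [k [Hk ->]]. now apply K.
Qed.

Lemma basin_avoids_zero z : basin a z0 p z -> avoids_zero a z.
Proof.
  intros [Hdef Hconv] n.
  destruct (orbit a n z) as [w|] eqn:E; [|now destruct (Hdef n)].
  exists w. split; auto. intros ->.
  assert (K : forall k, orbit a (k + n) z = Some (RtoC 0)).
  { induction k as [|k IH]; auto.
    rewrite plus_Sn_m, orbit_S, IH, Bhat_Some by apply no_pole_at_zero.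
    now rewrite B_zero. }
  destruct cycle_norm_lower_bound as [m [Hm Hmv]].
  destruct (Hconv m Hm) as [N HN].
  destruct (HN (N + n)%nat (RtoC 0)) as [v [Hv Hd]]; [lia | apply K|].
  specialize (Hmv v Hv). rewrite Cnorm_Cmod in Hd.
  change (Cmod (0 - v) < m) in Hd.
  replace (0 - v)%C with (- v)%C in Hd by ring. rewrite Cmod_opp in Hd. lra.
Qed.

Lemma basin_tau z : basin a z0 p z -> basin a (tau z0) p (tau z).
Proof.
  intros Hb. pose proof (basin_avoids_zero z Hb) as Hz.
  destruct Hb as [_ Hconv]. split.
  - intros n E. destruct (Hz n) as [w [Ew _]].
    rewrite (orbit_tau a z Hz n w Ew) in E. discriminate.
  - destruct cycle_norm_lower_bound as [m [Hm Hmv]].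
    intros eps He.
    destruct (Hconv (Rmin (m / 2) (eps * (m * m) / 2))) as [N HN].
    { apply Rmin_pos; [lra|]. apply Rdiv_lt_0_compat; [|lra]. apply Rmult_lt_0_compat; nra. }
    exists N. intros n w' Hn Ew'.
    destruct (Hz n) as [w [Ew _]].
    rewrite (orbit_tau a z Hz n w Ew) in Ew'. injection Ew' as <-.
    destruct (HN n w Hn Ew) as [v [[k [Hk Ek]] Hd]].
    exists (tau v). split.
    + exists k. split; auto. now apply orbit_tau; [apply cycle_avoids_zero|].
    + rewrite Cnorm_Cmod in *. apply tau_close with m; auto.
      apply Hmv. now exists k.
Qed.

Lemma tau_z0_on_cycle c : basin a z0 p c -> basin a z0 p (tau c) ->
  exists k, (k < p)%nat /\ tau z0 = Z k.
Proof.
  intros Hc Htc.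
  assert (Hper' : orbit a p (tau z0) = Some (tau z0))
    by (apply orbit_tau; [apply cycle_avoids_zero | exact Hper]).
  destruct (basins_share_cycle_point a z0 (tau z0) (tau c) p Hp Hper Hper' Htc
              (basin_tau c Hc)) as [i [j [Hi [Hj E]]]].
  destruct (cycle_iter_closed a z0 p Hp Hper i (p - j)) as [k [Hk Ek]].
  exists k. split; auto.
  rewrite <- Ek, E, <- Nat.iter_add. replace (p - j + j)%nat with p by lia.
  rewrite iter_tau_cycle. f_equal. symmetry. apply (cycle_add_period a z0 p Hp Hper 0).
Qed.

Lemma half_period k : (forall j, (0 < j < p)%nat -> orbit a j z0 <> Some z0) ->
  (0 < k < p)%nat -> tau z0 = Z k -> p = (k + k)%nat.
Proof.
  intros Hexact Hk E.
  assert (Hkk : Z (k + k) = z0).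
  { rewrite Nat.iter_add, <- E, iter_tau_cycle, <- E. now apply tau_involutive. }
  destruct (Nat.lt_total (k + k) p) as [Hlt|[Heq|Hgt]]; auto; exfalso.
  - apply (Hexact (k + k)%nat); [lia|].
    rewrite (proj1 (cycle_orbit a z0 p Hp Hper _)). now rewrite Hkk.
  - apply (Hexact (k + k - p)%nat); [lia|].
    rewrite (proj1 (cycle_orbit a z0 p Hp Hper _)).
    rewrite <- (cycle_add_period a z0 p Hp Hper).
    replace (k + k - p + p)%nat with (k + k)%nat by lia.
    now rewrite Hkk.
Qed.

(** Differentiating [B^k (1 / u) = 1 / conj (B^k (conj u))] at [u = conj z0]. *)
Lemma reflection_deriv k mu nu : tau z0 = Z k ->
  carath (Nat.iter k (B a)) z0 mu -> carath (Nat.iter k (B a)) (Z k) nu ->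
  nu = (z0 * z0 * (Cconj z0 * Cconj z0) * Cconj mu)%C.
Proof.
  intros E Hmu Hnu.
  set (u0 := Cconj z0). assert (Hu0 : u0 <> 0%R) by now apply Cconj_neq_0.
  set (c := Cconj (Z k)).
  assert (Hc : c = (/ z0)%C).
  { unfold c. rewrite <- E. unfold tau. rewrite Cinv_conj, Cconj_conj; auto. }
  assert (Hc0 : c <> 0%R) by (apply Cconj_neq_0, cycle_nonzero).
  assert (HG : carath (fun u => Nat.iter k (B a) (/ u)%C) u0 (nu * (- / (u0 * u0)))%C).
  { apply (carath_comp (fun u => / u)%C (Nat.iter k (B a))); [now apply carath_inv|].
    change (/ u0)%C with (tau z0). now rewrite E. }
  assert (HH : carath (fun u => / Cconj (Nat.iter k (B a) (Cconj u)))%C u0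
                 (- / (c * c) * Cconj mu)%C).
  { apply (carath_comp (fun u => Cconj (Nat.iter k (B a) (Cconj u))) (fun x => / x)%C).
    - apply carath_conj. unfold u0. now rewrite Cconj_conj.
    - cbv beta. unfold u0. rewrite Cconj_conj. now apply carath_inv. }
  destruct (B_regular_orbit_nbhd a z0 k) as [r [Hr Hreg]]; [intros; apply cycle_regular|].
  assert (Hloc : forall u, Cmod (u - u0) < r ->
            Nat.iter k (B a) (/ u)%C = (/ Cconj (Nat.iter k (B a) (Cconj u)))%C).
  { intros u Hu. replace (/ u)%C with (tau (Cconj u)) by (unfold tau; now rewrite Cconj_conj).
    apply iter_tau, Hreg. unfold u0 in Hu.
    now rewrite <- (Cconj_conj z0), <- Cminus_conj, Cmod_conj. }
  pose proof (has_cderiv_unique_loc _ _ _ _ _ r Hr Hloc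
                (carath_has_cderiv _ _ _ HG) (carath_has_cderiv _ _ _ HH)) as Eq.
  rewrite Hc in Eq.
  transitivity (nu * (- / (u0 * u0)) * (- (u0 * u0)))%C; [field; auto|].
  rewrite Eq. unfold u0. field. auto.
Qed.

Lemma reflected_cycle_multiplier k (lam : C) : tau z0 = Z k -> p = (k + k)%nat ->
  has_cderiv (Nat.iter p (B a)) z0 lam -> Cim lam = 0 /\ 0 <= Cre lam.
Proof.
  intros E Hpk Hlam.
  destruct (carath_iter a z0 k) as [mu Hmu].
  { intros j _. apply (cycle_orbit a z0 p Hp Hper j). }
  destruct (carath_iter a (Z k) k) as [nu Hnu].
  { intros j _. rewrite <- Nat.iter_add. apply (cycle_orbit a z0 p Hp Hper). }
  assert (Elam : lam = (nu * mu)%C).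
  { apply (has_cderiv_unique_loc (Nat.iter p (B a)) (Nat.iter p (B a)) z0 _ _ 1); auto; [lra|].
    apply carath_has_cderiv. rewrite Hpk.
    apply (carath_ext (fun w => Nat.iter k (B a) (Nat.iter k (B a) w))).
    { intros w. symmetry. apply Nat.iter_add. }
    now apply carath_comp. }
  rewrite Elam, (reflection_deriv k mu nu E Hmu Hnu).
  destruct z0 as [x y], mu as [m1 m2]. unfold Cre, Cim, Cmult, Cconj; simpl.
  split; [ring|].
  match goal with
  | |- 0 <= ?e => replace e with ((x * x + y * y) * (x * x + y * y) * (m1 * m1 + m2 * m2)) by ring
  end.
  apply Rmult_le_pos; [apply Rmult_le_pos|]; nra.
Qed.

Lemma fixed_reflection_component c : tau z0 = z0 -> immediate_basin a z0 p c ->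
  same_component (basin a z0 p) c (tau c).
Proof.
  intros Hfix [v [Hv [T [HTb [HTc [HTv HTz]]]]]].
  assert (HT0 : forall x : C, T x -> x <> 0%R).
  { intros x Tx. destruct (basin_avoids_zero x (HTb x Tx) 0%nat) as [w [Ew Hw]].
    now injection Ew as <-. }
  assert (Hv_fixed : tau v = v).
  { destruct (in_cycle_iter a z0 p Hp Hper v Hv) as [k [_ ->]].
    now rewrite <- iter_tau_cycle, Hfix. }
  exists (fun y => T y \/ exists t, T t /\ y = tau t). split; [|split; [|split]].
  - intros y [Ty|[t [Tt ->]]]; [auto|].
    rewrite <- Hfix. apply basin_tau. auto.
  - apply Cconnected_union with v; auto. now apply Cconnected_tau_image.
    exists v. auto.
  - now left.
  - right. now exists c.
Qed.

End ReflectedCycle.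

Lemma immediate_basin_basin (a z0 z : Cx) p : immediate_basin a z0 p z -> basin a z0 p z.
Proof. intros [v [_ [T [HT [_ [_ Tz]]]]]]. auto. Qed.

Lemma zero_cycle_multiplier (a : C) p (lam : C) : (0 < p)%nat ->
  has_cderiv (Nat.iter p (B a)) (RtoC 0) lam -> lam = RtoC 0.
Proof.
  intros Hp Hlam. destruct p as [|n]; [lia|].
  destruct (carath_iter a (RtoC 0) n) as [L HL].
  { intros j _. rewrite iter_B_zero. apply no_pole_at_zero. }
  apply (has_cderiv_unique_loc _ _ _ _ _ 1 Rlt_0_1 (fun _ _ => eq_refl) Hlam).
  apply carath_has_cderiv. eapply carath_val.
  - apply (carath_comp (Nat.iter n (B a)) (B a)); [exact HL|].
    rewrite iter_B_zero. apply carath_B, no_pole_at_zero.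
  - rewrite B_deriv_zero. ring.
Qed.

Theorem mainTheorem16 (a z0 : Cx) (p : nat) (lam : Cx) :
  2 < Cnorm a ->
  bitransitive_attracting a z0 p lam ->
  Cim lam = 0 /\ 0 <= Cre lam.
Proof.
  intros Ha [[Hp [Hper Hexact]] [Hlam [_ [Hplus [Hminus Hsep]]]]].
  destruct (classic (z0 = RtoC 0)) as [->|Hz0].
  { rewrite (zero_cycle_multiplier a p lam Hp Hlam). simpl. lra. }
  rewrite c_minus_tau in Hminus, Hsep by exact Ha.
  destruct (tau_z0_on_cycle a z0 p Hp Hper Hz0 (c_plus a)) as [k [Hk E]];
    auto using immediate_basin_basin.
  destruct (Nat.eq_dec k 0) as [->|Hk0].
  - exfalso. apply Hsep. now apply fixed_reflection_component.
  - apply (reflected_cycle_multiplier a z0 p Hp Hper Hz0 k); auto.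
    apply (half_period a z0 p Hp Hper Hz0); auto. lia.
Qed.
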